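(* Let $n,p,d\in\mathbb{N}$ and let $M\subseteq\mathbb{R}^{n+p+d}$ be a closed convex set inducing an MICP formulation of a set $S\subseteq\mathbb{R}^n$. Let $I=\operatorname{proj}_{\mathbf z}(M)$ be its index set and $\{A_{\mathbf z}\}_{\mathbf z\in I}$ its $\mathbf z$-projected sets. Then \[ \big(\operatorname{cl}(A_{\mathbf z})\big)_\infty=\big(\operatorname{cl}(A_{\mathbf z'})\big)_\infty\qquad\text{for all }\mathbf z,\mathbf z'\in\operatorname{relint}(I). \]
   Context: Variables in $\mathbb{R}^{n+p+d}$ are written $(\mathbf x,\mathbf y,\mathbf z)$ with $\mathbf x\in\mathbb{R}^n$, $\mathbf y\in\mathbb{R}^p$, $\mathbf z\in\mathbb{R}^d$; $\operatorname{proj}_{\mathbf x}$, $\operatorname{proj}_{\mathbf z}$ denote the coordinate projections. A closed convex set $M\subseteq\mathbb{R}^{n+p+d}$ induces an MICP formulation of $S\subseteq\mathbb{R}^n$ if: $\mathbf x\in S$ iff there exist $\mathbf y\in\mathbb{R}^p$, $\mathbf z\in\mathbb{Z}^d$ with $(\mathbf x,\mathbf y,\mathbf z)\in M$. The index set of the formulation is $I=\operatorname{proj}_{\mathbf z}(M)$, and for each $\mathbf z\in I$ the $\mathbf z$-projected set is $A_{\mathbf z}=\operatorname{proj}_{\mathbf x}\big(M\cap(\mathbb{R}^{n+p}\times\{\mathbf z\})\big)$. For a convex set $C$, its recession cone is $C_\infty=\{\mathbf r:\ \mathbf x+\lambda\mathbf r\in C\ \forall\mathbf x\in C,\ \forall\lambda\ge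 0\}$. $\operatorname{cl}$ denotes closure and $\operatorname{relint}$ relative interior. *)

From HB Require Import structures.
From mathcomp Require Import all_boot all_order all_algebra.
From mathcomp Require Import all_classical all_reals topology normedtype.
Set Implicit Arguments. Unset Strict Implicit. Unset Printing Implicit Defensive.
Import Order.TTheory GRing.Theory Num.Theory.
Import numFieldNormedType.Exports.
Local Open Scope classical_set_scope.
Local Open Scope ring_scope.

Definition convex_vset (R : realType) (k : nat) (C : set 'rV[R]_k) : Prop :=
  forall x y (t : R), C x -> C y -> 0 <= t -> t <= 1 ->
    C (t *: x + (1 - t) *: y).

Definition aff_hull (R : realType) (k : nat) (C : set 'rV[R]_k) : set 'rV[R]_k :=
  [set x | exists (m : nat) (v : 'I_m -> 'rV[R]_k) (c : 'I_m -> R),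
     (forall i, C (v i)) /\ \sum_(i < m) c i = 1 /\ x = \sum_(i < m) c i *: v i].

Definition relint (R : realType) (k : nat) (C : set 'rV[R]_k) : set 'rV[R]_k :=
  [set x | C x /\ exists2 e : R, 0 < e &
     forall y, aff_hull C y -> `|y - x| < e -> C y].

Definition rec_cone (R : realType) (k : nat) (C : set 'rV[R]_k) : set 'rV[R]_k :=
  [set r | forall x, C x -> forall l : R, 0 <= l -> C (x + l *: r)].

Definition int_vec (R : realType) (k : nat) (z : 'rV[R]_k) : Prop :=
  forall i, z ord0 i \is a Num.int.

Definition pt (R : realType) (n p d : nat) (x : 'rV[R]_n) (y : 'rV[R]_p)
  (z : 'rV[R]_d) : 'rV[R]_(n + (p + d)) := row_mx x (row_mx y z).

Definition induces_MICP (R : realType) (n p d : nat)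
  (M : set 'rV[R]_(n + (p + d))) (S : set 'rV[R]_n) : Prop :=
  closed M /\ convex_vset M /\
  forall x, S x <-> exists y z, int_vec z /\ M (pt x y z).

Definition index_set (R : realType) (n p d : nat)
  (M : set 'rV[R]_(n + (p + d))) : set 'rV[R]_d :=
  [set z | exists x y, M (pt x y z)].

Definition zproj_set (R : realType) (n p d : nat)
  (M : set 'rV[R]_(n + (p + d))) (z : 'rV[R]_d) : set 'rV[R]_n :=
  [set x | exists y, M (pt x y z)].

From HB Require Import structures.
From mathcomp Require Import all_boot all_order all_algebra.
From mathcomp Require Import all_classical all_reals topology normedtype.
From mathcomp Require Import ring lra.
Import Order.TTheory GRing.Theory Num.Theory.
Import numFieldNormedType.Exports.
Local Open Scope classical_set_scope.
Local Open Scope ring_scope.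

(* Fix z in relint(I) and z' in I; we show that every recession
   direction r of cl(A_z') is one of cl(A_z); applying this twice (both points
   lie in relint(I) ⊆ I) gives the equality.
   - Since z is relatively interior, the segment from z' through z can be
     prolonged inside I: z = t z' + (1-t) z'' with z'' in I and 0 < t <= 1.
   - Convexity of M gives t A_z' + (1-t) b ⊆ A_z for any fixed b in A_z'';
     this affine map has Lipschitz constant t <= 1, so it also sends
     cl(A_z') into cl(A_z).
   - Starting from a point a of A_z', the ray a + (l/t) r stays in cl(A_z'),
     so its image, the ray (t a + (1-t) b) + l r, stays in cl(A_z).
   - For a closed convex set, a single ray in direction r already makes r a
     recession direction.  cl(A_z) is closed and convex, which concludes. *)

Lemma closure_epsP {R : realType} {k : nat} {A : set 'rV[R]_k} {x : 'rV[R]_k} :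
  closure A x <-> forall e : R, 0 < e -> exists a, A a /\ `|x - a| < e.
Proof.
split.
- move=> clx e e0.
  have [a [Aa xa]] := clx (ball x e) (nbhsx_ballx x e e0).
  by exists a; split => //; move: xa; rewrite -ball_normE.
- move=> near_x B /nbhs_ballP [e e0 sB].
  have [a [Aa xa]] := near_x e e0.
  by exists a; split => //; apply: sB; rewrite -ball_normE.
Qed.

Lemma closure_convex {R : realType} {k : nat} {C : set 'rV[R]_k} :
  convex_vset C -> convex_vset (closure C).
Proof.
move=> cC x y t clx cly t0 t1; apply/closure_epsP => e e0.
have e20 : 0 < e / 2 by rewrite divr_gt0.
have [a [Ca xa]] := closure_epsP.1 clx _ e20.
have [b [Cb yb]] := closure_epsP.1 cly _ e20.
exists (t *: a + (1 - t) *: b); split; first exact: cC.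
have -> : t *: x + (1 - t) *: y - (t *: a + (1 - t) *: b) =
          t *: (x - a) + (1 - t) *: (y - b).
  by apply/matrixP => i j; rewrite !mxE; ring.
apply: (le_lt_trans (ler_normD _ _)).
rewrite !normrZ (ger0_norm t0) ger0_norm ?subr_ge0 //.
have ha : t * `|x - a| <= t * (e / 2) by rewrite ler_wpM2l // ltW.
have hb : (1 - t) * `|y - b| <= (1 - t) * (e / 2).
  by rewrite ler_wpM2l ?subr_ge0 // ltW.
lra.
Qed.

(* An affine map  a |-> t a + (1-t) b  with 0 <= t <= 1 is 1-Lipschitz, so if
   it maps A into C it maps cl(A) into cl(C). *)
Lemma closure_affine_image {R : realType} {k : nat} {A C : set 'rV[R]_k}
    {b : 'rV[R]_k} {t : R} : 0 <= t -> t <= 1 ->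
  (forall a, A a -> C (t *: a + (1 - t) *: b)) ->
  forall a, closure A a -> closure C (t *: a + (1 - t) *: b).
Proof.
move=> t0 t1 AC a cla; apply/closure_epsP => e e0.
have [a' [Aa' aa']] := closure_epsP.1 cla e e0.
exists (t *: a' + (1 - t) *: b); split; first exact: AC.
have -> : t *: a + (1 - t) *: b - (t *: a' + (1 - t) *: b) = t *: (a - a').
  by apply/matrixP => i j; rewrite !mxE; ring.
rewrite normrZ (ger0_norm t0); apply: le_lt_trans aa'.
by rewrite ler_piMl.
Qed.

(* In a closed convex set, one ray  c + l r  (l >= 0) makes r a recession
   direction: x + l r is the limit of the points (1-s) x + s (c + (l/s) r). *)
Lemma rec_cone_of_ray {R : realType} {k : nat} {K : set 'rV[R]_k}
    {c r : 'rV[R]_k} : closed K -> convex_vset K -> K c ->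
  (forall l : R, 0 <= l -> K (c + l *: r)) -> rec_cone K r.
Proof.
move=> clK cK Kc ray x Kx l l0.
rewrite (closure_id K).1 //; apply/closure_epsP => e e0.
set N := `|x - c|; set s := e / (N + e).
have N0 : 0 <= N := normr_ge0 _.
have Ne0 : 0 < N + e by lra.
have s0 : 0 < s by rewrite divr_gt0.
have s1 : s <= 1 by rewrite ler_pdivrMr // mul1r; lra.
have sNe : s * (N + e) = e by rewrite divfK // lt0r_neq0.
exists (s *: (c + (l / s) *: r) + (1 - s) *: x); split.
  apply: cK => //; last exact: ltW.
  by apply: ray; rewrite divr_ge0 // ltW.
have -> : x + l *: r - (s *: (c + (l / s) *: r) + (1 - s) *: x) = s *: (x - c).
  by apply/matrixP => i j; rewrite !mxE; field; rewrite lt0r_neq0.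
by rewrite normrZ (gtr0_norm s0) -/N; nra.
Qed.

Lemma relint_segment_extension {R : realType} {k : nat} {C : set 'rV[R]_k}
    {z z' : 'rV[R]_k} : relint C z -> C z' ->
  exists t z'', [/\ 0 < t, t <= 1, C z'' & z = t *: z' + (1 - t) *: z''].
Proof.
move=> [Cz [e e0 ball_in_C]] Cz'.
set w := z - z'; set dl := e / (`|w| + 1).
have w1 : 0 < `|w| + 1 by rewrite ltr_wpDl.
have dl0 : 0 < dl by rewrite divr_gt0.
have dl1 : 0 < 1 + dl by rewrite ltr_wpDl // ltW.
exists (dl / (1 + dl)), ((1 + dl) *: z - dl *: z'); split.
- by rewrite divr_gt0.
- by rewrite ler_pdivrMr // mul1r lerDr.
- apply: ball_in_C.
    exists 2%N, (fun i : 'I_2 => if i == ord0 then z else z'),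
      (fun i : 'I_2 => if i == ord0 then 1 + dl else - dl).
    split; first by move=> i; case: ifP.
    rewrite !big_ord_recl !big_ord0 /=; split; first by ring.
    by apply/matrixP => i j; rewrite !mxE; ring.
  have -> : (1 + dl) *: z - dl *: z' - z = dl *: w.
    by apply/matrixP => i j; rewrite !mxE; ring.
  rewrite normrZ gtr0_norm // /dl -mulrA mulrC -mulrA ltr_pdivrMl //.
  by rewrite ltr_pM2r // ltrDl.
- by apply/matrixP => i j; rewrite !mxE; field; rewrite lt0r_neq0.
Qed.

Lemma zproj_combine {R : realType} {n p d : nat}
    {M : set 'rV[R]_(n + (p + d))} {z1 z2 x1 x2} {t : R} : convex_vset M ->
  zproj_set M z1 x1 -> zproj_set M z2 x2 -> 0 <= t -> t <= 1 ->
  zproj_set M (t *: z1 + (1 - t) *: z2) (t *: x1 + (1 - t) *: x2).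
Proof.
move=> cM [y1 M1] [y2 M2] t0 t1; exists (t *: y1 + (1 - t) *: y2).
have -> : pt (t *: x1 + (1 - t) *: x2) (t *: y1 + (1 - t) *: y2)
    (t *: z1 + (1 - t) *: z2) = t *: pt x1 y1 z1 + (1 - t) *: pt x2 y2 z2.
  by rewrite /pt !scale_row_mx !add_row_mx.
exact: cM.
Qed.

Lemma zproj_convex {R : realType} {n p d : nat}
    {M : set 'rV[R]_(n + (p + d))} (z : 'rV[R]_d) :
  convex_vset M -> convex_vset (zproj_set M z).
Proof.
move=> cM x1 x2 t Ax1 Ax2 t0 t1.
have -> : z = t *: z + (1 - t) *: z.
  by apply/matrixP => i j; rewrite !mxE; ring.
exact: zproj_combine.
Qed.

Lemma rec_cone_zproj_incl {R : realType} {n p d : nat}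
    {M : set 'rV[R]_(n + (p + d))} {z z' : 'rV[R]_d} : convex_vset M ->
  relint (index_set M) z -> index_set M z' ->
  rec_cone (closure (zproj_set M z')) `<=` rec_cone (closure (zproj_set M z)).
Proof.
move=> cM rz Iz'.
have [t [z'' [t0 t1 [b [yb Mb]] ->]]] := relint_segment_extension rz Iz'.
have [a [ya Ma]] := Iz'.
have image_in : forall a' : 'rV[R]_n, closure (zproj_set M z') a' ->
    closure (zproj_set M (t *: z' + (1 - t) *: z'')) (t *: a' + (1 - t) *: b).
  have t0' := ltW t0.
  apply: closure_affine_image => // a' Aa'.
  by apply: zproj_combine => //; exists yb.
move=> r rr.
have cla : closure (zproj_set M z') a by apply: subset_closure; exists ya.
have closedA : closed (closure (zproj_set M (t *: z' + (1 - t) *: z''))).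
  exact: closed_closure.
apply: (rec_cone_of_ray closedA
  (closure_convex (zproj_convex _ cM)) (image_in a cla)) => l l0.
have -> : t *: a + (1 - t) *: b + l *: r =
          t *: (a + (l / t) *: r) + (1 - t) *: b.
  by apply/matrixP => i j; rewrite !mxE; field; rewrite lt0r_neq0.
apply: image_in; apply: rr => //.
by rewrite divr_ge0 // ltW.
Qed.

Theorem proposition1 (R : realType) (n p d : nat)
  (M : set 'rV[R]_(n + (p + d))) (S : set 'rV[R]_n) :
  induces_MICP M S ->
  forall z z' : 'rV[R]_d,
    relint (index_set M) z -> relint (index_set M) z' ->
    rec_cone (closure (zproj_set M z)) = rec_cone (closure (zproj_set M z')).
Proof.
move=> [_ [cM _]] z z' rz rz'.
apply/seteqP; split.
- exact: rec_cone_zproj_incl cM rz' rz.1.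
- exact: rec_cone_zproj_incl cM rz rz'.1.
Qed.
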